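(* Let $d\ge 2$ and let $c_0,\dots,c_7\in\mathbb{Z}_d$. If the $d$-state first degree cellular automaton with parameters $\langle c_0,\dots,c_7\rangle$ is reversible for every number of cells $n\in\mathbb{N}$ under the null boundary condition, then $c_0\equiv c_1\equiv c_2\equiv c_3\equiv 0 \pmod{\mathrm{rad}(d)}$.
   Context: Fix an integer $d\ge 2$ and the state set $S=\mathbb{Z}_d=\{0,1,\dots,d-1\}$. A first degree cellular automaton (FDCA) with parameters $\langle c_0,\dots,c_7\rangle$, $c_i\in\mathbb{Z}_d$, is the one-dimensional 3-neighborhood cellular automaton whose local rule $R:S^3\to S$ is $R(x,y,z)=c_0xyz+c_1xy+c_2xz+c_3yz+c_4x+c_5y+c_6z+c_7 \pmod d$. For $n\in\mathbb{N}$, $n\ge1$, the $n$-cell automaton under the null boundary condition acts on configurations $x=(x_0,\dots,x_{n-1})\in S^n$ by the global map $G_n:S^n\to S^n$, $G_n(x)_i=R(x_{i-1},x_i,x_{i+1})$ for $0\le i\le n-1$, with the convention $x_{-1}=x_n=0$. The automaton is reversible for a given $n$ if $G_n$ is a bijection. $\mathrm{rad}(d)=\prod_{p\mid d,\ p\text{ prime}}p$ is the product of the distinct primes dividing $d$; since $\mathrm{rad}(d)\mid d$, congruences of elements of $\mathbb{Z}_d$ modulo $\mathrm{rad}(d)$ are well defined. *)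

From mathcomp Require Import all_boot.
Set Implicit Arguments. Unset Strict Implicit. Unset Printing Implicit Defensive.

Definition rad (d : nat) : nat := \prod_(p <- primes d) p.

Definition fdca_rule (d : nat) (c : 'I_8 -> 'I_d) (x y z : nat) : nat :=
  (c (inord 0) * x * y * z + c (inord 1) * x * y + c (inord 2) * x * z
   + c (inord 3) * y * z + c (inord 4) * x + c (inord 5) * y
   + c (inord 6) * z + c (inord 7)) %% d.

Lemma fdca_rule_lt d (hd : 0 < d) (c : 'I_8 -> 'I_d) x y z : fdca_rule c x y z < d.
Proof. by rewrite /fdca_rule ltn_pmod. Qed.

(* cell value with null boundary: x_{-1} = x_n = 0 *)
Definition cell (d n : nat) (x : {ffun 'I_n -> 'I_d}) (i : nat) : nat :=
  match insub i : option 'I_n with Some j => nat_of_ord (x j) | None => 0 end.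

Definition fdca_global (d : nat) (hd : 0 < d) (c : 'I_8 -> 'I_d) (n : nat)
  (x : {ffun 'I_n -> 'I_d}) : {ffun 'I_n -> 'I_d} :=
  [ffun i : 'I_n =>
     Ordinal (fdca_rule_lt hd c (if i is Ordinal 0 _ then 0 else cell x i.-1) (cell x i) (cell x i.+1))].

Definition fdca_reversible (d : nat) (hd : 0 < d) (c : 'I_8 -> 'I_d) (n : nat) : Prop :=
  bijective (fdca_global hd c (n:=n)).

(* Reduce modulo a prime p dividing d: reversibility over Z_d makes the
   reduced automaton over F_p surjective, hence injective, for every n.  Over
   a field, injectivity for n <= 4 forces c_5 <> 0 and then c_3 = c_1 = c_0 =
   c_2 = 0: otherwise one exhibits two distinct configurations with the same
   image, by choosing values that cancel the nonlinear terms.  Hence every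
   prime divisor of d divides c_0, ..., c_3, and so does their product rad d. *)

From mathcomp Require Import all_boot all_algebra ring.
Set Implicit Arguments. Unset Strict Implicit. Unset Printing Implicit Defensive.
Import GRing.Theory.

Lemma onto_injF (T : finType) (f : T -> T) : (forall y, exists x, f x = y) -> injective f.
Proof.
move=> f_onto x y; apply: (image_injP _) => //; apply/eqP/eq_card => z.
by have [w <-] := f_onto z; rewrite in_setT image_f ?in_setT.
Qed.

Lemma dvdn_prod_primes (s : seq nat) m : uniq s -> all prime s ->
  {in s, forall p, p %| m} -> \prod_(p <- s) p %| m.
Proof.
elim: s => [|q s IHs] /=; first by rewrite big_nil dvd1n.
case/andP=> qNs s_uniq /andP[q_pr s_pr] s_dvd.
have q_coprime : coprime q (\prod_(p <- s) p).
  rewrite prime_coprime // Euclid_dvd_prod // big_has_cond; apply/hasPn => p ps /=.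
  by rewrite dvdn_prime2 // ?(allP s_pr p ps) //; apply: contraNneq qNs => ->.
rewrite big_cons Gauss_dvd // s_dvd ?mem_head // IHs // => p ps.
by apply: s_dvd; rewrite inE ps orbT.
Qed.

Section FieldAutomaton.
Local Open Scope ring_scope.
Variables (F : fieldType) (C : nat -> F).

Definition ruleF (x y z : F) : F :=
  C 0 * x * y * z + C 1 * x * y + C 2 * x * z + C 3 * y * z
  + C 4 * x + C 5 * y + C 6 * z + C 7.

Definition cellF n (s : {ffun 'I_n -> F}) (i : nat) : F :=
  match insub i : option 'I_n with Some j => s j | None => 0 end.

Definition globalF n (s : {ffun 'I_n -> F}) : {ffun 'I_n -> F} :=
  [ffun i : 'I_n =>
     ruleF (if i is Ordinal 0 _ then 0 else cellF s i.-1) (cellF s i) (cellF s i.+1)].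

(* Cell i of the image of the configuration listed by l; the explicit case
   i = 0 is needed because nth 0 l (0.-1) is the first entry, not the boundary. *)
Definition global_nth (l : seq F) (i : nat) : F :=
  ruleF (if i is 0 then 0 else nth 0 l i.-1) (nth 0 l i) (nth 0 l i.+1).

Lemma cellF_nth n (l : seq F) k : size l = n ->
  cellF [ffun i : 'I_n => nth 0 l i] k = nth 0 l k.
Proof.
move=> size_l; rewrite /cellF; case: insubP => [j _ <-|]; first by rewrite ffunE.
by rewrite -leqNgt -size_l => le_l_k; rewrite nth_default.
Qed.

Hypothesis globalF_inj : forall n, (0 < n)%N -> injective (@globalF n).

Lemma global_nth_inj (l l' : seq F) : size l = size l' -> (0 < size l)%N ->
  (forall i, (i < size l)%N -> global_nth l i = global_nth l' i) -> l = l'.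
Proof.
move=> eq_size size_gt0 eq_image.
have eq_ffun :
    [ffun i : 'I_(size l) => nth 0 l i] = [ffun i : 'I_(size l) => nth 0 l' i].
  apply: globalF_inj => //; apply/ffunP => i; rewrite !ffunE.
  have := eq_image i (ltn_ord i); rewrite /global_nth.
  by case: i => [[|k] lt_k] /=; rewrite !cellF_nth ?eq_size.
apply: (@eq_from_nth _ 0) => // i lt_i.
have := congr1 (fun f : {ffun 'I_(size l) -> F} => f (Ordinal lt_i)) eq_ffun.
by rewrite !ffunE.
Qed.

Ltac unfold_image := rewrite /global_nth /ruleF /=.

Lemma coef5_neq0 : C 5 != 0.
Proof.
apply/eqP => C5_0.
suff: [:: 0] = [:: 1] :> seq F by move=> [] /eqP; rewrite eq_sym oner_eq0.
apply: global_nth_inj => // -[|] // _; unfold_image; rewrite C5_0; ring.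
Qed.

(* With c_3 <> 0 the first cell of the two-cell image is
   c_3 (y_0 + a) (y_1 + b) + const, blind to y_1 once y_0 = -a and to y_0
   once y_1 = -b.  On y_0 = -a the second cell is affine in y_1 with slope
   s1: if s1 = 0 it is constant too, otherwise some (-a, y1) matches the
   image of (-a + 1, -b). *)
Lemma coef3_eq0 : C 3 = 0.
Proof.
apply/eqP/negPn/negP => C3_neq0.
have C5_neq0 := coef5_neq0.
pose a := C 6 / C 3; pose b := C 5 / C 3.
pose s1 := C 5 - C 1 * a.
have [s1_0|s1_neq0] := eqVneq s1 0.
  suff: [:: -a; 0] = [:: -a; 1] :> seq F by move=> [] /eqP; rewrite eq_sym oner_eq0.
  apply: global_nth_inj => // -[|[|]] // _; unfold_image; rewrite /a; first by field.
  by move/eqP: s1_0; rewrite subr_eq0 /a => /eqP ->; field.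
pose g := C 1 * (- a + 1) * (- b) + C 4 * (- a + 1) + C 5 * (- b) + C 7.
pose y1 := (g + C 4 * a - C 7) / s1.
suff: [:: -a + 1; -b] = [:: -a; y1] :> seq F.
  by move=> [] /(congr1 (+%R^~ a)) /eqP; rewrite addrAC !addNr add0r oner_eq0.
apply: global_nth_inj => // -[|[|]] // _; unfold_image.
  by rewrite /a /b /y1 /g; field; rewrite s1_neq0 C3_neq0.
rewrite /y1 /g; move: s1_neq0; rewrite /s1 /a /b => s1_neq0.
field; rewrite C3_neq0 /=.
have -> : C 5 * C 3 - C 1 * C 6 = (C 5 - C 1 * (C 6 / C 3)) * C 3 by field.
by rewrite mulf_neq0.
Qed.

(* Shifting y_0 by c_6/c_5 while raising y_1 by 1 preserves the first cell;
   with c_1 <> 0 a suitable y_0 also preserves the second. *)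
Lemma coef1_eq0 : C 1 = 0.
Proof.
apply/eqP/negPn/negP => C1_neq0.
have C5_neq0 := coef5_neq0; have C3_0 := coef3_eq0.
pose t := C 6 / C 5.
pose u := (C 1 * t + C 4 * t - C 5) / C 1.
suff: [:: u; 0] = [:: u - t; 1] :> seq F by move=> [] _ /eqP; rewrite eq_sym oner_eq0.
apply: global_nth_inj => // -[|[|]] // _; unfold_image; rewrite C3_0 /u /t;
  by field; rewrite ?C1_neq0 ?C5_neq0.
Qed.

(* The three-cell analogue: shift y_0 and y_2 so that the outer cells are
   preserved, and solve for them so that the middle cell is too. *)
Lemma coef0_eq0 : C 0 = 0.
Proof.
apply/eqP/negPn/negP => C0_neq0.
have C5_neq0 := coef5_neq0; have C3_0 := coef3_eq0; have C1_0 := coef1_eq0.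
pose t := C 6 / C 5; pose v := C 4 / C 5.
pose K := C 2 * t * v + C 4 * t + C 6 * v - C 5.
pose X := (1 + C 2 * t) / C 0.
pose Z := (C 0 * K + C 2 ^+ 2 * t * v + C 2 * v) / C 0.
suff: [:: X + t; 0; Z + v] = [:: X; 1; Z] :> seq F.
  by move=> [] _ /eqP; rewrite eq_sym oner_eq0.
apply: global_nth_inj => // -[|[|[|]]] // _; unfold_image;
  rewrite C3_0 C1_0 /X /Z /K /t /v; field; by rewrite ?C0_neq0 ?C5_neq0.
Qed.

(* Now the middle cell is c_2 y_0 y_2 + affine terms, and the same shift changes
   it by c_2 (X v + Z t) + K.  This can be cancelled unless c_4 = c_6 = 0,
   where four cells give a collision instead. *)
Lemma coef2_eq0 : C 2 = 0.
Proof.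
apply/eqP/negPn/negP => C2_neq0.
have C5_neq0 := coef5_neq0; have C3_0 := coef3_eq0.
have C1_0 := coef1_eq0; have C0_0 := coef0_eq0.
pose t := C 6 / C 5; pose v := C 4 / C 5.
pose K := C 2 * t * v + C 4 * t + C 6 * v - C 5.
have collision X Z : C 2 * (X * v + Z * t) + K = 0 ->
    [:: X + t; 0; Z + v] = [:: X; 1; Z] :> seq F.
  move=> XZ_0; apply: global_nth_inj => // -[|[|[|]]] // _; unfold_image;
    rewrite C3_0 C1_0 C0_0.
  - by rewrite /t; field.
  - apply/eqP; rewrite -subr_eq0 -[X in _ == X]XZ_0 /K; apply/eqP; ring.
  - by rewrite /v; field.
have no_collision X Z : C 2 * (X * v + Z * t) + K <> 0.
  by move/collision => [] _ /eqP; rewrite eq_sym oner_eq0.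
have [C4_0|C4_neq0] := eqVneq (C 4) 0; last first.
  apply: (no_collision (- K / (C 2 * v)) 0); rewrite /v.
  by field; rewrite ?C2_neq0 ?C4_neq0 ?C5_neq0.
have [C6_0|C6_neq0] := eqVneq (C 6) 0; last first.
  apply: (no_collision 0 (- K / (C 2 * t))); rewrite /t.
  by field; rewrite ?C2_neq0 ?C6_neq0 ?C5_neq0.
pose s := C 5 / C 2.
suff: [:: s; 0; 0; s] = [:: s; 1; -1; s] :> seq F.
  by move=> [] /eqP; rewrite eq_sym oner_eq0.
apply: global_nth_inj => // -[|[|[|[|]]]] // _; unfold_image;
  rewrite C3_0 C1_0 C0_0 C4_0 C6_0 /s; by field; rewrite ?C2_neq0.
Qed.

Lemma coef_lt4_eq0 k : (k < 4)%N -> C k = 0.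
Proof.
by case: k => [|[|[|[|]]]] // _;
  [exact: coef0_eq0 | exact: coef1_eq0 | exact: coef2_eq0 | exact: coef3_eq0].
Qed.

End FieldAutomaton.

Section ReductionModPrime.
Variables (d p : nat) (d_gt1 : 1 < d) (c : 'I_8 -> 'I_d).
Hypotheses (p_pr : prime p) (p_dvd_d : p %| d).
Local Open Scope ring_scope.

Definition coefFp (k : nat) : 'F_p := (c (inord k) : nat)%:R.

Lemma natr_modd m : ((m %% d)%N%:R : 'F_p) = m%:R.
Proof.
have d_0 : (d%:R : 'F_p) = 0 by apply/eqP; rewrite -(dvdn_pcharf (pchar_Fp p_pr)).
by rewrite {2}(divn_eq m d) natrD natrM d_0 mulr0 add0r.
Qed.

Definition reduce n (x : {ffun 'I_n -> 'I_d}) : {ffun 'I_n -> 'F_p} :=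
  [ffun i => (x i : nat)%:R].

Lemma cellF_reduce n (x : {ffun 'I_n -> 'I_d}) k : cellF (reduce x) k = (cell x k)%:R.
Proof. by rewrite /cellF /cell; case: insubP => [j _ _|_]; rewrite ?ffunE. Qed.

Lemma globalF_reduce n (x : {ffun 'I_n -> 'I_d}) :
  globalF coefFp (reduce x) = reduce (fdca_global (ltnW d_gt1) c x).
Proof.
apply/ffunP => i; rewrite !ffunE /= /fdca_rule natr_modd /ruleF.
by case: i => [[|k] lt_k] /=; rewrite !cellF_reduce !natrD !natrM.
Qed.

Lemma reduce_onto n (t : {ffun 'I_n -> 'F_p}) : exists x, reduce x = t.
Proof.
have lt_d i : (t i < d)%N.
  by apply: leq_trans (ltn_ord (t i)) _; rewrite Fp_cast // dvdn_leq // ltnW.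
by exists [ffun i => Ordinal (lt_d i)]; apply/ffunP => i; rewrite !ffunE natr_Zp.
Qed.

Lemma globalF_inj_of_reversible n :
  fdca_reversible (ltnW d_gt1) c n -> injective (globalF coefFp (n:=n)).
Proof.
case=> G_inv _ G_invK; apply: onto_injF => t.
have [x <-] := reduce_onto t.
by exists (reduce (G_inv x)); rewrite globalF_reduce G_invK.
Qed.

Lemma prime_dvdn_coef_lt4 :
  (forall n, (1 <= n)%N -> fdca_reversible (ltnW d_gt1) c n) ->
  forall i : 'I_8, (i < 4)%N -> (p %| c i)%N.
Proof.
move=> rev i lt_i4.
have := coef_lt4_eq0 (fun n n_gt0 => globalF_inj_of_reversible (rev n n_gt0)) lt_i4.
by rewrite /coefFp inord_val => /eqP; rewrite -(dvdn_pcharf (pchar_Fp p_pr)).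
Qed.

End ReductionModPrime.

Theorem lemma2 (d : nat) (hd : 1 < d) (c : 'I_8 -> 'I_d) :
  (forall n : nat, 1 <= n -> fdca_reversible (ltnW hd) c n) ->
  forall i : 'I_8, i < 4 -> c i %% rad d = 0.
Proof.
move=> rev i lt_i4; apply/eqP; apply: dvdn_prod_primes; first exact: primes_uniq.
  by apply/allP => p; rewrite mem_primes => /andP[].
move=> p; rewrite mem_primes => /and3P[p_pr _ p_dvd_d].
exact: prime_dvdn_coef_lt4.
Qed.
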